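(* Suppose $p=2p_1$, $q=2q_1$, $r=2r_1$ are all even, and let $H$ be the quotient of $W(p,q,r)$ by the normal subgroup generated by $\big((s_1s_3)^{q_1}(s_1s_2)^{p_1}(s_2s_3)^{r_1}\big)^2$. Then for every reflection representation $R$ of $W(p,q,r)$ (any admissible parameters) with $\Delta=0$, $R$ factors through $H$; in particular $G=R(W)$ is isomorphic to a quotient of $H$.
   Context: Setting. Let $p,q,r\ge 3$ be integers and $W=W(p,q,r)$ the Coxeter group with generators $s_1,s_2,s_3$ and relations $s_i^2=1$, $(s_1s_2)^p=(s_1s_3)^q=(s_2s_3)^r=1$. Let $\alpha=4\cos^2(\pi k_1/p)$, $\beta=4\cos^2(\pi k_2/q)$, $\gamma=4\cos^2(\pi k_3/r)$ with $\gcd(k_1,p)=\gcd(k_2,q)=\gcd(k_3,r)=1$ (so $0<\alpha,\beta,\gamma<4$), and let $l,m\in\mathbb{C}$ with $lm=\gamma$. Let $K\subset\mathbb{C}$ be a field containing $\alpha,\beta,\gamma,l,m$, and $M$ a $3$-dimensional $K$-vector space with basis $(a_1,a_2,a_3)$. The reflection representation $R:W\to GL(M)$ with parameters $(\alpha,\beta,\gamma;l,m)$ is defined by: for $x=\lambda_1a_1+\lambda_2a_2+\lambda_3a_3$, $R(s_1)x=x-(2\lambda_1-\alpha\lambda_2-\beta\lambda_3)a_1$, $R(s_2)x=x-(-\lambda_1+2\lambda_2-l\lambda_3)a_2$, $R(s_3)x=x-(-\lambda_1-m\lambda_2+2\lambda_3)a_3$. Put $G=R(W)$ and write $s_i$ for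 $R(s_i)$. Let $\Delta=8-2\alpha-2\beta-2\gamma-(\alpha l+\beta m)$; $R$ is reducible iff $\Delta=0$. *)

From HB Require Import structures.
From mathcomp Require Import all_boot all_order all_algebra.
Set Implicit Arguments. Unset Strict Implicit. Unset Printing Implicit Defensive.
Import Order.TTheory GRing.Theory Num.Theory.
Local Open Scope ring_scope.

(* The coefficient matrix B of the reflection representation with parameters
   (alpha, beta, gamma; l, m): row i of B is the linear form x |-> c_i(x) with
   R(s_i) x = x - c_i(x) a_i, in coordinates (lambda_1, lambda_2, lambda_3):
     c_1 = 2 l1 - alpha l2 - beta l3
     c_2 = - l1 + 2 l2 - l l3
     c_3 = - l1 - m l2 + 2 l3                                               *)
Definition refl_form (R : ringType) (alpha beta l m : R) : 'M[R]_3 :=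
  \matrix_(i < 3, j < 3)
    nth 0 (nth [::] [:: [:: 2; - alpha; - beta];
                        [:: -1; 2; - l];
                        [:: -1; - m; 2]] i) j.

Definition refl_gen (R : ringType) (alpha beta l m : R) (i : 'I_3) : 'M[R]_3 :=
  1%:M - delta_mx i i *m refl_form alpha beta l m.

Definition s1 (R : ringType) (alpha beta l m : R) := refl_gen alpha beta l m (inord 0).
Definition s2 (R : ringType) (alpha beta l m : R) := refl_gen alpha beta l m (inord 1).
Definition s3 (R : ringType) (alpha beta l m : R) := refl_gen alpha beta l m (inord 2).

Definition Delta (R : ringType) (alpha beta gamma l m : R) : R :=
  8 - 2 * alpha - 2 * beta - 2 * gamma - (alpha * l + beta * m).

From HB Require Import structures.
From mathcomp Require Import all_boot all_order all_algebra.
From mathcomp Require Import ring zify.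
Import Order.TTheory GRing.Theory Num.Theory.
Local Open Scope ring_scope.

(* For i <> j the product s_i s_j fixes the line ker c_i /\ ker c_j and acts on
   span(a_i, a_j) with eigenvalues z, z^-1, where 2 + z + z^-1 = B_ij B_ji and z
   is a primitive root of unity of order 2k.  Since X^k agrees with
   2 (X - z)(X - z^-1) / ((1 - z)(1 - z^-1)) - 1 at 1, z and z^-1, the power
   (s_i s_j)^k is the half-turn 2 P_ij - 1, where P_ij projects onto that line
   along span(a_i, a_j).  The three half-turns are explicit matrices, and the
   square of their product is the identity as soon as Delta = 0: this relation is
   linear in l, and solving it for l turns the claim into rational identities. *)

Definition mk3 {R : pzRingType} (a b c d e f g h i : R) : 'M[R]_3 :=
  \matrix_(r < 3, s < 3)
    nth 0 (nth [::] [:: [:: a; b; c]; [:: d; e; f]; [:: g; h; i]] r) s.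

Ltac mx3_entrywise := apply/matrixP => -[[|[|[|?]]] ?] -[[|[|[|?]]] ?] //.

Section Coordinates.
Variable R : pzRingType.
Implicit Types a b c d e f g h i k : R.

Lemma mul3 a b c d e f g h i a' b' c' d' e' f' g' h' i' :
  mk3 a b c d e f g h i *m mk3 a' b' c' d' e' f' g' h' i' =
  mk3 (a*a'+b*d'+c*g') (a*b'+b*e'+c*h') (a*c'+b*f'+c*i')
      (d*a'+e*d'+f*g') (d*b'+e*e'+f*h') (d*c'+e*f'+f*i')
      (g*a'+h*d'+i*g') (g*b'+h*e'+i*h') (g*c'+h*f'+i*i').
Proof. by mx3_entrywise; rewrite !mxE !big_ord_recr big_ord0 /= !mxE /= add0r. Qed.

Lemma add3 a b c d e f g h i a' b' c' d' e' f' g' h' i' :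
  mk3 a b c d e f g h i + mk3 a' b' c' d' e' f' g' h' i' =
  mk3 (a+a') (b+b') (c+c') (d+d') (e+e') (f+f') (g+g') (h+h') (i+i').
Proof. by mx3_entrywise; rewrite !mxE. Qed.

Lemma opp3 a b c d e f g h i :
  - mk3 a b c d e f g h i = mk3 (-a) (-b) (-c) (-d) (-e) (-f) (-g) (-h) (-i).
Proof. by mx3_entrywise; rewrite !mxE. Qed.

Lemma scale3 k a b c d e f g h i :
  k *: mk3 a b c d e f g h i = mk3 (k*a) (k*b) (k*c) (k*d) (k*e) (k*f) (k*g) (k*h) (k*i).
Proof. by mx3_entrywise; rewrite !mxE. Qed.

Lemma scalar3 k : k%:M = mk3 k 0 0 0 k 0 0 0 k.
Proof. by mx3_entrywise; rewrite !mxE. Qed.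

End Coordinates.

Section Generators.
Variables (R : comRingType) (a b l m : R).

Lemma s1E : s1 a b l m = mk3 (-1) a b 0 1 0 0 0 1.
Proof.
by mx3_entrywise; rewrite !mxE !big_ord_recr big_ord0 /= !mxE -!val_eqE /= !inordK //=; ring.
Qed.

Lemma s2E : s2 a b l m = mk3 1 0 0 1 (-1) l 0 0 1.
Proof.
by mx3_entrywise; rewrite !mxE !big_ord_recr big_ord0 /= !mxE -!val_eqE /= !inordK //=; ring.
Qed.

Lemma s3E : s3 a b l m = mk3 1 0 0 0 1 0 1 m (-1).
Proof.
by mx3_entrywise; rewrite !mxE !big_ord_recr big_ord0 /= !mxE -!val_eqE /= !inordK //=; ring.
Qed.

End Generators.

(* [axisij] is v e_k^T, where v spans the axis ker c_i /\ ker c_j of s_i s_j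
   and k is the third index; divided by 4 - B_ij B_ji it is the projection P_ij. *)
Definition axis12 {R : pzRingType} (a b l : R) :=
  mk3 0 0 (a * l + 2 * b) 0 0 (b + 2 * l) 0 0 (4 - a).
Definition axis13 {R : pzRingType} (a b m : R) :=
  mk3 0 (2 * a + b * m) 0 0 (4 - b) 0 0 (a + 2 * m) 0.
Definition axis23 {R : pzRingType} (l m : R) :=
  mk3 (4 - l * m) 0 0 (2 + l) 0 0 (2 + m) 0 0.

Section HalfTurns.
Context {K : fieldType}.

Lemma prim_root_expr_half {k} {z : K} : (1 < k)%N -> (2 * k)%N.-primitive_root z ->
  [/\ z != 0, z ^+ 2 != 1 & z ^+ k = -1].
Proof.
move=> k_gt1 prim_z; split.
- by rewrite (prim_root_eq0 prim_z) muln_eq0 negb_or /= -lt0n ltnW.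
- by rewrite -(prim_order_dvd prim_z) gtnNdvd //; lia.
- have : (z ^+ k) ^+ 2 == 1 by rewrite -exprM mulnC prim_expr_order.
  by rewrite sqrf_eq1 -(prim_order_dvd prim_z) gtnNdvd /=; [move/eqP | lia | lia].
Qed.

Lemma prim_root_cos2_neq4 {k} {z : K} :
  (1 < k)%N -> (2 * k)%N.-primitive_root z -> 2 + z + z^-1 != 4.
Proof.
move=> k_gt1 prim_z; have [z_neq0 z2_neq1 _] := prim_root_expr_half k_gt1 prim_z.
have z_neq1 : z != 1 by apply: contraNneq z2_neq1 => ->; rewrite expr1n.
rewrite -subr_eq0 (_ : _ - 4 = (z - 1) ^+ 2 / z); last by field.
by rewrite mulf_neq0 ?invr_eq0 // expf_neq0 // subr_eq0.
Qed.

Lemma expr_half_turn {n k} {T Q : 'M[K]_n.+1} {a z : K} :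
  (1 < k)%N -> (2 * k)%N.-primitive_root z -> a = 2 + z + z^-1 ->
  T ^+ 2 - (a - 2) *: T + 1%:M = Q -> T *m Q = Q ->
  T ^+ k = (2 / (4 - a)) *: Q - 1%:M.
Proof.
move=> k_gt1 prim_z -> defQ TQ.
have [z_neq0 z2_neq1 zk] := prim_root_expr_half k_gt1 prim_z.
have z_neq1 : z != 1 by apply: contraNneq z2_neq1 => ->; rewrite expr1n.
have den_neq0 : 4 - (2 + z + z^-1) != 0.
  by rewrite subr_eq0 eq_sym (prim_root_cos2_neq4 k_gt1 prim_z).
pose q : {poly K} := 'X ^+ 2 - (2 + z + z^-1 - 2) *: 'X + 1.
have qT : horner_mx T q = Q.
  by rewrite -defQ rmorphD rmorphB /= horner_mxZ rmorphXn rmorph1 /= horner_mx_X.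
have q1 : q.[1] = 4 - (2 + z + z^-1) by rewrite !hornerE /=; ring.
have q_factor : q = ('X - z%:P) * ('X - z^-1%:P).
  have zK : z%:P * z^-1%:P = 1 :> {poly K} by rewrite -polyCM mulfV.
  rewrite /q (_ : 2 + z + z^-1 - 2 = z + z^-1); last by ring.
  by rewrite -mul_polyC polyCD -zK; ring.
clearbody q.
pose f := (2 / (4 - (2 + z + z^-1))) *: q - 1.
have [r Er] : exists r, 'X ^+ k - f = r * \prod_(x <- [:: 1; z; z^-1]) ('X - x%:P).
  apply: uniq_roots_prod_XsubC.
    rewrite /= andbT; apply/and3P; split; rewrite rootE /f !hornerE /=.
    - by rewrite q1 divfK // expr1n; apply/eqP; ring.
    - by rewrite q_factor !hornerE /= zk subrr mulr0 mul0r; apply/eqP; ring.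
    - by rewrite q_factor !hornerE /= exprVn zk invrN invr1 subrr mulr0; apply/eqP; ring.
  rewrite uniq_rootsE /= !inE negb_or eq_sym z_neq1 eq_sym invr_eq1 z_neq1 /= andbT.
  by apply: contraNneq z2_neq1 => zV; rewrite expr2 {1}zV mulVf.
have := congr1 (horner_mx T) Er.
rewrite !big_cons big_nil mulr1 -q_factor !rmorphM !rmorphB /= rmorphXn /=.
rewrite horner_mx_X horner_mx_C qT horner_mxZ qT.
have -> : (T - 1%:M) * Q = 0 by rewrite mulrBl mul1r -mulmxE TQ subrr.
by rewrite mulr0 => /eqP; rewrite subr_eq0 => /eqP.
Qed.

Section Pairs.
Context {k : nat} {z a b l m : K}.
Hypotheses (k_gt1 : (1 < k)%N) (prim_z : (2 * k)%N.-primitive_root z).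

Lemma s1s2_half_turn : a = 2 + z + z^-1 ->
  (s1 a b l m *m s2 a b l m) ^+ k = (2 / (4 - a)) *: axis12 a b l - 1%:M.
Proof.
move=> a_def; apply: (expr_half_turn k_gt1 prim_z a_def).
all: rewrite s1E s2E /axis12 ?expr2 -?mulmxE !(mul3, scale3, scalar3, opp3, add3).
all: by congr mk3; ring.
Qed.

Lemma s1s3_half_turn : b = 2 + z + z^-1 ->
  (s1 a b l m *m s3 a b l m) ^+ k = (2 / (4 - b)) *: axis13 a b m - 1%:M.
Proof.
move=> b_def; apply: (expr_half_turn k_gt1 prim_z b_def).
all: rewrite s1E s3E /axis13 ?expr2 -?mulmxE !(mul3, scale3, scalar3, opp3, add3).
all: by congr mk3; ring.
Qed.

Lemma s2s3_half_turn : l * m = 2 + z + z^-1 ->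
  (s2 a b l m *m s3 a b l m) ^+ k = (2 / (4 - l * m)) *: axis23 l m - 1%:M.
Proof.
move=> lm_def; apply: (expr_half_turn k_gt1 prim_z lm_def).
all: rewrite s2E s3E /axis23 ?expr2 -?mulmxE !(mul3, scale3, scalar3, opp3, add3).
all: by congr mk3; ring.
Qed.

End Pairs.

Lemma half_turns_mul_sqr (a b l m : K) :
  a != 4 -> b != 4 -> l * m != 4 -> Delta a b (l * m) l m = 0 ->
  (((2 / (4 - b)) *: axis13 a b m - 1%:M) *m ((2 / (4 - a)) *: axis12 a b l - 1%:M)
     *m ((2 / (4 - l * m)) *: axis23 l m - 1%:M)) ^+ 2 = 1%:M.
Proof.
move=> a_neq4 b_neq4 lm_neq4 Delta0.
have am_neq0 : a + 2 * m != 0.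
  apply/eqP => am0; have a_def : a = - (2 * m) by rewrite -[a]subr0 -am0; ring.
  have : (4 - b) * (2 + m) = 0 by rewrite -Delta0 /Delta a_def; ring.
  move/eqP; rewrite mulf_eq0 subr_eq0 eq_sym (negbTE b_neq4) /= => /eqP m0.
  have : a - 4 = - 2 * (2 + m) by rewrite a_def; ring.
  by rewrite m0 mulr0 => /eqP; rewrite subr_eq0 (negbTE a_neq4).
have l_def : l = (8 - 2 * a - 2 * b - b * m) / (a + 2 * m).
  apply: (mulIf am_neq0); rewrite divfK //.
  have : l * (a + 2 * m) - (8 - 2 * a - 2 * b - b * m) = - Delta a b (l * m) l m.
    by rewrite /Delta; ring.
  by rewrite Delta0 oppr0 => /eqP; rewrite subr_eq0 => /eqP.
have lm_num : 4 * (a + 2 * m) - (8 - 2 * a - 2 * b - b * m) * m != 0.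
  apply: contraNneq lm_neq4 => /subr0_eq num0.
  by rewrite l_def mulrAC -num0 mulfK.
rewrite l_def /axis13 /axis12 /axis23 expr2 -mulmxE.
rewrite !(mul3, scale3, scalar3, opp3, add3); congr mk3; field.
all: by rewrite am_neq0 lm_num !subr_eq0 ![4 == _]eq_sym a_neq4 b_neq4.
Qed.
End HalfTurns.

Theorem corollary3 (K : numClosedFieldType) (p1 q1 r1 : nat)
    (hp : (2 <= p1)%N) (hq : (2 <= q1)%N) (hr : (2 <= r1)%N)
    (z1 z2 z3 l m : K)
    (hz1 : (2 * p1)%N.-primitive_root z1)
    (hz2 : (2 * q1)%N.-primitive_root z2)
    (hz3 : (2 * r1)%N.-primitive_root z3)
    (hlm : l * m = 2 + z3 + z3^-1)
    (hDelta : Delta (2 + z1 + z1^-1) (2 + z2 + z2^-1) (2 + z3 + z3^-1) l m = 0) :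
  let alpha := 2 + z1 + z1^-1 in
  let beta := 2 + z2 + z2^-1 in
  let S1 := s1 alpha beta l m in
  let S2 := s2 alpha beta l m in
  let S3 := s3 alpha beta l m in
  ((S1 *m S3) ^+ q1 *m (S1 *m S2) ^+ p1 *m (S2 *m S3) ^+ r1) ^+ 2 = 1%:M.
Proof.
move=> alpha beta S1 S2 S3; rewrite /S1 /S2 /S3.
rewrite (s1s3_half_turn hq hz2 (erefl beta)) (s1s2_half_turn hp hz1 (erefl alpha)).
rewrite (s2s3_half_turn hr hz3 hlm).
apply: half_turns_mul_sqr; rewrite ?hlm.
- exact: prim_root_cos2_neq4 hp hz1.
- exact: prim_root_cos2_neq4 hq hz2.
- exact: prim_root_cos2_neq4 hr hz3.
- exact: hDelta.
Qed.
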